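(* Let $R$ be a commutative ring and $I$ an ideal of $R$ with $I=I^2$. Then $I$ has avoidance.
   Context: All rings are commutative with $1\neq 0$. An ideal $I$ of a ring $R$ has avoidance if whenever $I_1,\ldots,I_n$ are finitely many ideals of $R$ with $I\subseteq\bigcup_{k=1}^n I_k$, then $I\subseteq I_k$ for some $k$. *)

From mathcomp Require Import all_boot all_algebra.
Set Implicit Arguments. Unset Strict Implicit. Unset Printing Implicit Defensive.
Import GRing.Theory.
Local Open Scope ring_scope.

Definition is_ideal (R : comNzRingType) (I : R -> Prop) : Prop :=
  [/\ I 0,
      (forall x y, I x -> I y -> I (x + y)) &
      (forall r x, I x -> I (r * x))].

Definition ideal_mul (R : comNzRingType) (I J : R -> Prop) : R -> Prop :=
  fun x => exists (n : nat) (a b : 'I_n -> R),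
    (forall i, I (a i)) /\ (forall i, J (b i)) /\ x = \sum_(i < n) a i * b i.

Definition has_avoidance (R : comNzRingType) (I : R -> Prop) : Prop :=
  forall (n : nat) (Is : 'I_n -> R -> Prop),
    (forall k, is_ideal (Is k)) ->
    (forall x, I x -> exists k, Is k x) ->
    exists k, forall x, I x -> Is k x.

From mathcomp Require Import all_boot all_algebra ring.
From Stdlib Require Import Classical.
Set Implicit Arguments.
Unset Strict Implicit.
Unset Printing Implicit Defensive.
Import GRing.Theory.
Local Open Scope ring_scope.

(* Induction on the number of ideals covering I.  Let I ⊆ P ∪ Q_0 ∪ ... ∪
   Q_(n-1) with I contained in none of them.  By induction no n of the ideals
   cover I, which yields
   - an element a of I lying in no Q_j (hence a ∈ P);
   - I ⊆ P + Q_j for every j (replace the pair P, Q_j by their sum);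
   - I ∩ Q_0 ∩ ... ∩ Q_(n-1) ⊆ P, by translating such elements by a.
   Say that P absorbs K when (I ∩ K)·I ⊆ P.  The last point gives absorption
   of Q_0 ∩ ... ∩ Q_(n-1); since I ⊆ I^2 and I ⊆ P + Q_j, absorption of K ∩ Q_j
   implies absorption of K, so the Q_j can be dropped one at a time.  Hence
   I·I ⊆ P, and I ⊆ I^2 ⊆ P contradicts the assumption on P. *)

Section IdealFacts.
Variable R : comNzRingType.
Implicit Types (J K : R -> Prop).

Lemma ideal0 K : is_ideal K -> K 0. Proof. by case. Qed.

Lemma idealD K : is_ideal K -> forall x y, K x -> K y -> K (x + y).
Proof. by case. Qed.

Lemma idealMl K : is_ideal K -> forall r x, K x -> K (r * x).
Proof. by case. Qed.

Lemma idealMr K : is_ideal K -> forall x r, K x -> K (x * r).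
Proof. by move=> hK x r Kx; rewrite mulrC; apply: idealMl. Qed.

Lemma idealB K : is_ideal K -> forall x y, K x -> K y -> K (x - y).
Proof. by move=> hK x y Kx Ky; apply: idealD => //; rewrite -mulN1r; apply: idealMl. Qed.

Lemma ideal_sum K : is_ideal K -> forall n (f : 'I_n -> R),
  (forall i, K (f i)) -> K (\sum_(i < n) f i).
Proof. by move=> hK n f Kf; apply: big_ind => //; [apply: ideal0 | apply: idealD]. Qed.

Definition ideal_add J K : R -> Prop :=
  fun x => exists u v, [/\ J u, K v & x = u + v].

Lemma ideal_add_ideal J K : is_ideal J -> is_ideal K -> is_ideal (ideal_add J K).
Proof.
move=> hJ hK; split.
- by exists 0, 0; rewrite addr0; split => //; apply: ideal0.
- move=> _ _ [u1 [v1 [J1 K1 ->]]] [u2 [v2 [J2 K2 ->]]].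
  by exists (u1 + u2), (v1 + v2); rewrite addrACA; split => //; apply: idealD.
- move=> r _ [u [v [Ju Kv ->]]].
  by exists (r * u), (r * v); rewrite mulrDr; split => //; apply: idealMl.
Qed.

Lemma ideal_addl J K x : is_ideal K -> J x -> ideal_add J K x.
Proof. by move=> hK Jx; exists x, 0; rewrite addr0; split => //; apply: ideal0. Qed.

Lemma ideal_addr J K x : is_ideal J -> K x -> ideal_add J K x.
Proof. by move=> hJ Kx; exists 0, x; rewrite add0r; split => //; apply: ideal0. Qed.

End IdealFacts.

Section Absorption.
Variables (R : comNzRingType) (I P : R -> Prop).
Hypotheses (hI : is_ideal I) (hP : is_ideal P).
Hypothesis I_sub_sq : forall x, I x -> ideal_mul I I x.

Definition absorbs (K : R -> Prop) : Prop :=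
  forall y x, I y -> K y -> I x -> P (y * x).

Lemma absorbs_of_sub (K : R -> Prop) :
  (forall y, I y -> K y -> P y) -> absorbs K.
Proof. by move=> hK y x Iy Ky _; apply: idealMr => //; apply: hK. Qed.

(* Write x = Σ a_i b_i with a_i, b_i ∈ I and a_i = u + v
   with u ∈ P, v ∈ Q; then y a_i b_i = (y u) b_i + (y v) b_i with y v ∈ I ∩ K'. *)
Lemma absorbs_step (K K' Q : R -> Prop) :
  is_ideal Q -> (forall r y, K y -> K (y * r)) ->
  (forall x, I x -> ideal_add P Q x) ->
  (forall y, K y -> Q y -> K' y) ->
  absorbs K' -> absorbs K.
Proof.
move=> hQ hK I_sub_PQ KQ_sub absK' y x Iy Ky /I_sub_sq [m [a [b [Ia [Ib ->]]]]].
rewrite mulr_sumr; apply: ideal_sum => // i.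
have [u [v [Pu Qv ->]]] := I_sub_PQ _ (Ia i).
have -> : y * ((u + v) * b i) = y * u * b i + y * v * b i by ring.
apply: idealD => //; first by apply: idealMr => //; apply: idealMl.
apply: absK' => //; first exact: idealMr.
by apply: KQ_sub; [apply: hK | apply: idealMl].
Qed.

(* Absorbing everything means I·I ⊆ P, hence I ⊆ I^2 ⊆ P. *)
Lemma absorbs_all_sub : absorbs (fun _ => True) -> forall x, I x -> P x.
Proof.
move=> absT x /I_sub_sq [m [a [b [Ia [Ib ->]]]]].
by apply: ideal_sum => // i; apply: absT.
Qed.

End Absorption.

Section InductiveStep.
Variables (R : comNzRingType) (I : R -> Prop) (n : nat).
Hypotheses (hI : is_ideal I) (I_sub_sq : forall x, I x -> ideal_mul I I x).

Hypothesis IH : forall Js : 'I_n -> R -> Prop,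
  (forall k, is_ideal (Js k)) -> (forall x, I x -> exists k, Js k x) ->
  exists k, forall x, I x -> Js k x.

Variable Is : 'I_n.+1 -> R -> Prop.
Hypotheses (hIs : forall k, is_ideal (Is k)) (cover : forall x, I x -> exists k, Is k x).
Hypothesis not_sub : forall k, ~ (forall x, I x -> Is k x).

Let P := Is ord_max.
Let Q (j : 'I_n) := Is (lift ord_max j).

Let hP : is_ideal P. Proof. exact: hIs. Qed.
Let hQ j : is_ideal (Q j). Proof. exact: hIs. Qed.

Let cover_PQ x : I x -> P x \/ exists j, Q j x.
Proof.
move=> /cover [k]; case: (unliftP ord_max k) => [j ->|->]; last by left.
by right; exists j.
Qed.

(* The Q_j alone do not cover I: some a ∈ I lies in no Q_j, hence in P. *)
Lemma exists_outside_Q : exists a, [/\ I a, P a & forall j, ~ Q j a].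
Proof.
have [[a [Ia Qa]] | none] := classic (exists a, I a /\ forall j, ~ Q j a).
  exists a; split=> //; have [//|[j Qja]] := cover_PQ Ia.
  by case: (Qa j).
have [j sub_Qj] : exists j, forall x, I x -> Q j x.
  apply: IH => // x Ix; apply: NNPP => nQx; apply: none.
  by exists x; split=> // j Qjx; apply: nQx; exists j.
by case: (not_sub sub_Qj).
Qed.

(* Merging P and Q_j into P + Q_j gives a cover by n ideals, so I ⊆ P + Q_j. *)
Lemma I_sub_P_add_Q j : forall x, I x -> ideal_add P (Q j) x.
Proof.
pose Js k := if k == j then ideal_add P (Q j) else Q k.
have hJs k : is_ideal (Js k).
  by rewrite /Js; case: eqP => _; [apply: ideal_add_ideal | apply: hQ].
have [k sub_Jk] : exists k, forall x, I x -> Js k x.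
  apply: IH => // x /cover_PQ [Px | [k Qkx]].
    by exists j; rewrite /Js eqxx; apply: ideal_addl.
  exists k; rewrite /Js; case: eqP => [<-|//].
  exact: ideal_addr.
move: sub_Jk; rewrite /Js; case: eqP => [_ //|_ sub_Qk].
by case: (not_sub sub_Qk).
Qed.

(* Translating by a: for y ∈ I ∩ ⋂ Q_j, y + a lies in no Q_j, so y + a ∈ P. *)
Lemma I_meet_Q_sub_P y : I y -> (forall j, Q j y) -> P y.
Proof.
move=> Iy Qy; have [a [Ia Pa Qa]] := exists_outside_Q.
have [Pya | [j Qjya]] := cover_PQ (idealD hI Iy Ia).
  by rewrite -(addrK a y); apply: idealB.
case: (Qa j); have -> : a = (y + a) - y by rewrite addrAC subrr add0r.
exact: idealB.
Qed.

(* Dropping the Q_j one at a time: P absorbs ⋂_(j ∉ s) Q_j for every s. *)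
Lemma absorbs_outside (s : seq 'I_n) :
  absorbs I P (fun y => forall j, j \notin s -> Q j y).
Proof.
elim: s => [|j s absorbs_s].
  by apply: absorbs_of_sub => // y Iy Qy; apply: I_meet_Q_sub_P => // j; apply: Qy.
apply: (absorbs_step hI hP I_sub_sq (hQ j)) absorbs_s.
- by move=> r y Qy k nk; apply: idealMr => //; apply: Qy.
- exact: I_sub_P_add_Q.
- move=> y Qy Qjy k nks; have [-> // | nkj] := eqVneq k j.
  by apply: Qy; rewrite inE negb_or nkj.
Qed.

(* With s enumerating all indices the condition on y is empty, so P absorbs
   everything and therefore contains I. *)
Lemma I_sub_last : forall x, I x -> Is ord_max x.
Proof.
apply: (absorbs_all_sub hP I_sub_sq) => y x Iy _ Ix.
have notin_enum j : j \notin enum 'I_n -> Q j y by rewrite mem_enum.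
exact: (absorbs_outside (s := enum 'I_n) Iy notin_enum Ix).
Qed.

End InductiveStep.

Lemma idempotent_avoidance (R : comNzRingType) (I : R -> Prop) :
  is_ideal I -> (forall x, I x -> ideal_mul I I x) -> has_avoidance I.
Proof.
move=> hI I_sub_sq n; elim: n => [|n IH] Is hIs cover.
  by have [[]] := cover 0 (ideal0 hI).
apply: NNPP => none.
have not_sub k : ~ (forall x, I x -> Is k x) by move=> sub_k; apply: none; exists k.
by apply: (not_sub ord_max); apply: (I_sub_last hI I_sub_sq IH hIs cover not_sub).
Qed.

Theorem corollary2p2 (R : comNzRingType) (I : R -> Prop) :
  is_ideal I ->
  (forall x, I x <-> ideal_mul I I x) ->
  has_avoidance I.
Proof.
move=> hI I_eq_sq; apply: idempotent_avoidance => // x.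
exact: (proj1 (I_eq_sq x)).
Qed.
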